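(* Let $X$ be a noncommutative space embedded in $\mathcal A^m$, $e=\tilde E^j\ast E_j$, with canonical connections $\nabla_i\zeta=\partial_i\zeta-\zeta\ast\partial_ie$ on $TX=\mathcal A^m\ast e$ and $\tilde\nabla_i\xi=\partial_i\xi-\partial_i(e)\ast\xi$ on $\tilde TX=e\ast{}^m\!\mathcal A$, and curvature $\mathcal R_{ij}=-(\partial_ie\ast\partial_je-\partial_je\ast\partial_ie)$. Define $R^l_{kij}=E_k\ast\mathcal R_{ij}\ast\tilde E^l$ and $\tilde R^l_{kij}=-g^{lq}\ast E_q\ast\mathcal R_{ij}\ast\tilde E^p\ast g_{pk}$. Then $$R^l_{kij}=-\partial_j\Gamma^l_{ik}-\Gamma^p_{ik}\ast\Gamma^l_{jp}+\partial_i\Gamma^l_{jk}+\Gamma^p_{jk}\ast\Gamma^l_{ip},$$ $$\tilde R^l_{kij}=-\partial_j\tilde\Gamma^l_{ik}-\tilde\Gamma^l_{jp}\ast\tilde\Gamma^p_{ik}+\partial_i\tilde\Gamma^l_{jk}+\tilde\Gamma^l_{ip}\ast\tilde\Gamma^p_{jk},$$ and $[\nabla_i,\nabla_j]E_k=R^l_{kij}\ast E_l$, $[\tilde\nabla_i,\tilde\nabla_j](E_k)^t=(E_l)^t\ast\tilde R^l_{kij}$.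
   Context: $\mathcal A$ denotes the Moyal algebra: for $U\subset\mathbb R^n$ open with coordinates $t$ and $\hbar$ a formal real indeterminate, $\mathcal A$ is the set of formal power series $\sum_{i\ge0}f_i\hbar^i$ with real smooth coefficients on $U$, with product $(f\ast g)(t)=\lim_{t'\to t}\exp\big(\hbar\sum_{i,j}\theta_{ij}\frac{\partial}{\partial t^i}\frac{\partial}{\partial t'^j}\big)f(t)g(t')$ for a fixed constant real skew-symmetric $\theta$ ($\partial_i=\partial/\partial t^i$ are commuting derivations, acting entrywise on matrices). Matrices over $\mathcal A$ are multiplied using $\ast$; $\mathcal A^m$ row vectors, ${}^m\!\mathcal A$ column vectors. Einstein summation. For $X=(X^1,\dots,X^m)\in\mathcal A^m$, $g_{ij}=\sum_\alpha\partial_iX^\alpha\ast\partial_jX^\alpha$; $X$ is a noncommutative space embedded in $\mathcal A^m$ if $(g_{ij})$ is invertible, inverse $(g^{ij})$. $E_i=\partial_iX$, $(E_i)^t$ its transpose, $\tilde E^i=(E_j)^t\ast g^{ji}$. ${}_c\Gamma_{ijl}=\tfrac12(\partial_ig_{jl}+\partial_jg_{li}-\partial_lg_{ji})$, $\Upsilon_{ijl}=\tfrac12(\partial_i(E_j)\ast(E_l)^t-E_l\ast\partial_i(E_j)^t)$, $\Gamma_{ijl}={}_c\Gamma_{ijl}+\Upsilon_{ijl}$, $\tilde\Gamma_{ijl}={}_c\Gamma_{ijl}-\Upsilon_{ijl}$, $\Gamma_{ij}^k=\Gamma_{ijl}\ast g^{lk}$, $\tilde\Gamma_{ij}^k=g^{kl}\ast\tilde\Gamma_{ijl}$.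 *)

From HB Require Import structures.
From mathcomp Require Import all_boot all_order all_algebra.
Set Implicit Arguments. Unset Strict Implicit. Unset Printing Implicit Defensive.
Import Order.TTheory GRing.Theory Num.Theory.
Local Open Scope ring_scope.

Section NCGeom.
Variables (A : unitRingType) (n m : nat).
(* d i = the commuting derivation \partial_i of the algebra A *)
Variable d : 'I_n -> A -> A.
Variable X : 'rV[A]_m.
(* ginv = (g^{ij}), the inverse of the metric g *)
Variable ginv : 'M[A]_n.

Definition dmx (i : 'I_n) p q (M : 'M[A]_(p, q)) : 'M[A]_(p, q) := map_mx (d i) M.

Definition lsc p (a : A) (v : 'rV[A]_p) : 'rV[A]_p := \row_k (a * v 0 k).
Definition rsc p (v : 'cV[A]_p) (a : A) : 'cV[A]_p := \col_k (v k 0 * a).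

Definition Evec (i : 'I_n) : 'rV[A]_m := dmx i X.
Definition gmet : 'M[A]_n := \matrix_(i, j) ((Evec i *m (Evec j)^T) 0 0).
Definition Etil (i : 'I_n) : 'cV[A]_m := \sum_j rsc (Evec j)^T (ginv j i).
Definition eproj : 'M[A]_m := \sum_j (Etil j *m Evec j).

Definition nabla (i : 'I_n) (z : 'rV[A]_m) : 'rV[A]_m := dmx i z - z *m dmx i eproj.
Definition nablat (i : 'I_n) (x : 'cV[A]_m) : 'cV[A]_m := dmx i x - dmx i eproj *m x.

Definition Rcurv (i j : 'I_n) : 'M[A]_m :=
  - (dmx i eproj *m dmx j eproj - dmx j eproj *m dmx i eproj).

Definition Rcomp (l k i j : 'I_n) : A := (Evec k *m Rcurv i j *m Etil l) 0 0.
Definition Rtcomp (l k i j : 'I_n) : A :=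
  - \sum_q \sum_p (ginv l q * (Evec q *m Rcurv i j *m Etil p) 0 0 * gmet p k).

Definition half : A := (2%:R : A)^-1.
Definition cGam (i j l : 'I_n) : A :=
  half * (d i (gmet j l) + d j (gmet l i) - d l (gmet j i)).
Definition Ups (i j l : 'I_n) : A :=
  half * ((dmx i (Evec j) *m (Evec l)^T) 0 0 - (Evec l *m (dmx i (Evec j))^T) 0 0).
Definition Gam3 (i j l : 'I_n) : A := cGam i j l + Ups i j l.
Definition Gamt3 (i j l : 'I_n) : A := cGam i j l - Ups i j l.
(* Gam i j k = \Gamma_{ij}^k ;  Gamt i j k = \tilde\Gamma_{ij}^k *)
Definition Gam (i j k : 'I_n) : A := \sum_l Gam3 i j l * ginv l k.
Definition Gamt (i j k : 'I_n) : A := \sum_l ginv k l * Gamt3 i j l.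

End NCGeom.

(* Write E for the n x m frame matrix whose rows are E_k = \partial_k X, and
   T = E^t g^{-1} for the matrix whose columns are \tilde E^l.  Then E T = 1, so
   the projector e = T E is an idempotent that factors as e = Q P with P Q = 1.
   The whole theorem is linear algebra over such a factorization:
   - for any idempotent e and derivations, \partial e e + e \partial e = \partial e,
     hence e commutes with the curvature  R_{ij} = -[\partial_i e, \partial_j e];
   - for any factorization e = Q P with P Q = 1, the "connection matrices"
     \partial_i P Q satisfy a Gauss-type structure equation expressing P R_{ij} Q;
     since \partial_i P Q = - P \partial_i Q the same holds for P \partial_i Q;
   - for any square e, the commutators of the connections z |-> \partial z - z \partial e
     and x |-> \partial x - \partial e x are z R_{ij} and -R_{ij} x.
   The Christoffel symbols are then identified with the entries of
   \partial_i E T and g^{-1} E \partial_i E^t; applying the structure equation to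
   the factorizations (E, T) and (g^{-1} E, E^t) of e gives the theorem. *)
From Pilot Require Import Defs.
From HB Require Import structures.
From mathcomp Require Import all_boot all_order all_algebra.
Import GRing.Theory.
Local Open Scope ring_scope.
Set Implicit Arguments. Unset Strict Implicit. Unset Printing Implicit Defensive.

Definition derivation (R : pzRingType) (f : R -> R) : Prop :=
  (forall x y, f (x + y) = f x + f y) /\ (forall x y, f (x * y) = f x * y + x * f y).

Section Derivation.
Variables (R : pzRingType) (f : R -> R).
Hypothesis df : derivation f.

Lemma derD x y : f (x + y) = f x + f y. Proof. by case: df. Qed.
Lemma derM x y : f (x * y) = f x * y + x * f y. Proof. by case: df. Qed.

Lemma der0 : f 0 = 0.
Proof. by apply: (addrI (f 0)); rewrite -derD !addr0. Qed.

Lemma derN x : f (- x) = - f x.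
Proof. by apply: (addrI (f x)); rewrite -derD !subrr der0. Qed.

Lemma der1 : f 1 = 0.
Proof. have := derM 1 1; rewrite !mulr1 mul1r => h. by apply: (addrI (f 1)); rewrite addr0 -h. Qed.

Lemma der_sum I (r : seq I) (P : pred I) (F : I -> R) :
  f (\sum_(k <- r | P k) F k) = \sum_(k <- r | P k) f (F k).
Proof. exact: (big_morph f derD der0). Qed.

Lemma map_derD p q (M N : 'M[R]_(p, q)) : map_mx f (M + N) = map_mx f M + map_mx f N.
Proof. by apply/matrixP=> a b; rewrite !mxE derD. Qed.

Lemma map_derN p q (M : 'M[R]_(p, q)) : map_mx f (- M) = - map_mx f M.
Proof. by apply/matrixP=> a b; rewrite !mxE derN. Qed.

Lemma map_derB p q (M N : 'M[R]_(p, q)) : map_mx f (M - N) = map_mx f M - map_mx f N.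
Proof. by rewrite map_derD map_derN. Qed.

Lemma map_derM p q r (M : 'M[R]_(p, q)) (N : 'M[R]_(q, r)) :
  map_mx f (M *m N) = map_mx f M *m N + M *m map_mx f N.
Proof.
apply/matrixP=> a b; rewrite !mxE der_sum -big_split; apply: eq_bigr => k _.
by rewrite derM !mxE.
Qed.

Lemma map_der1 p : map_mx f (1%:M : 'M[R]_p) = 0.
Proof. by apply/matrixP=> a b; rewrite !mxE; case: (a == b); rewrite ?der1 ?der0. Qed.

End Derivation.

Definition curv (R : pzRingType) (m : nat) (fi fj : R -> R) (e : 'M[R]_m) : 'M[R]_m :=
  - (map_mx fi e *m map_mx fj e - map_mx fj e *m map_mx fi e).

Definition conn_right (R : pzRingType) (m p : nat) (f : R -> R) (e : 'M[R]_m)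
  (z : 'M[R]_(p, m)) : 'M[R]_(p, m) := map_mx f z - z *m map_mx f e.

Definition conn_left (R : pzRingType) (m p : nat) (f : R -> R) (e : 'M[R]_m)
  (x : 'M[R]_(m, p)) : 'M[R]_(m, p) := map_mx f x - map_mx f e *m x.

(* The cancellation pattern of a commutator of two first-order operators: the
   terms a and c are symmetric in i and j, while b and d are exchanged. *)
Lemma commutator_cancel (V : zmodType) (a b c d u v : V) :
  (a - (b + c) - (d - u)) - (a - (d + c) - (b - v)) = u - v.
Proof.
have swap_bd : a - (b + c) - d = a - (d + c) - b.
  by rewrite -!addrA -!opprD addrAC [(d + c) + b]addrC addrA.
have subrB (x y w : V) : x - (y - w) = (x - y) + w by rewrite opprB addrCA addrC.
rewrite [a - _ - (d - u)]subrB [a - _ - (b - v)]subrB swap_bd.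
by rewrite [- (_ + v)]opprD addrACA subrr add0r.
Qed.

Section Connections.
Variables (R : pzRingType) (m p : nat) (fi fj : R -> R) (e : 'M[R]_m).
Hypotheses (dfi : derivation fi) (dfj : derivation fj).
Hypothesis fij : forall x, fi (fj x) = fj (fi x).

Lemma map_der_comm q r (M : 'M[R]_(q, r)) : map_mx fi (map_mx fj M) = map_mx fj (map_mx fi M).
Proof. by apply/matrixP=> a b; rewrite !mxE fij. Qed.

Lemma conn_right_commutator (z : 'M[R]_(p, m)) :
  conn_right fi e (conn_right fj e z) - conn_right fj e (conn_right fi e z) = z *m curv fi fj e.
Proof.
rewrite /conn_right /curv !map_derB // !map_derM // !mulmxBl ?mulmxA !map_der_comm.
by rewrite commutator_cancel mulmxN mulmxBr opprB !mulmxA.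
Qed.

Lemma conn_left_commutator (x : 'M[R]_(m, p)) :
  conn_left fi e (conn_left fj e x) - conn_left fj e (conn_left fi e x) = - (curv fi fj e *m x).
Proof.
rewrite /conn_left /curv !map_derB // !map_derM // !mulmxBr ?mulmxA !map_der_comm.
rewrite !(addrC (map_mx fj (map_mx fi e) *m x)) commutator_cancel.
by rewrite mulNmx opprK mulmxBl.
Qed.
End Connections.

(* For an idempotent e, the derivative of e is off-diagonal with respect to
   the decomposition e + (1 - e); consequently the curvature commutes with e. *)
Section Idempotent.
Variables (R : pzRingType) (m : nat) (e : 'M[R]_m).
Hypothesis e_idem : e *m e = e.

Lemma der_idem f : derivation f -> map_mx f e = map_mx f e *m e + e *m map_mx f e.
Proof. by move=> df; rewrite -map_derM // e_idem. Qed.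

Lemma der_idem_sandwich f : derivation f -> e *m map_mx f e *m e = 0.
Proof.
move=> df; apply: (addrI (e *m map_mx f e *m e)); rewrite addr0.
by rewrite [in RHS](der_idem df) mulmxDr mulmxDl !mulmxA e_idem -!mulmxA e_idem !mulmxA.
Qed.

Lemma compl_idem : (1%:M - e) *m (1%:M - e) = 1%:M - e.
Proof. by rewrite mulmxBl mul1mx mulmxBr mulmx1 e_idem subrr subr0. Qed.

Lemma der_idem_prod_comm f g : derivation f -> derivation g ->
  e *m (map_mx f e *m map_mx g e) = map_mx f e *m map_mx g e *m e.
Proof.
move=> df dg; rewrite [in LHS](der_idem dg) [in RHS](der_idem df).
rewrite !mulmxDr !mulmxDl !mulmxA der_idem_sandwich // mul0mx addr0.
have -> : map_mx f e *m e *m map_mx g e *m e = map_mx f e *m (e *m map_mx g e *m e).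
  by rewrite !mulmxA.
by rewrite der_idem_sandwich // mulmx0 add0r.
Qed.

Lemma curv_idem_comm fi fj : derivation fi -> derivation fj ->
  e *m curv fi fj e = curv fi fj e *m e.
Proof.
move=> dfi dfj.
by rewrite /curv mulmxN mulNmx mulmxBr mulmxBl !der_idem_prod_comm.
Qed.
End Idempotent.

(* An idempotent presented as e = Q P with P Q = 1; in the application P is
   the frame (rows E_k) and Q the coframe (columns \tilde E^l), or their
   duals g^{-1} E and E^t. *)
Section Factorization.
Variables (R : pzRingType) (n m : nat) (P : 'M[R]_(n, m)) (Q : 'M[R]_(m, n)).
Hypothesis PQ1 : P *m Q = 1%:M.
Local Notation e := (Q *m P).

Lemma factor_idem : e *m e = e.
Proof. by rewrite mulmxA -(mulmxA Q) PQ1 mulmx1. Qed.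

Lemma factor_Pe : P *m e = P.
Proof. by rewrite mulmxA PQ1 mul1mx. Qed.

Lemma factor_eQ : e *m Q = Q.
Proof. by rewrite -mulmxA PQ1 mulmx1. Qed.

Section OneDerivation.
Variable f : R -> R.
Hypothesis df : derivation f.

Lemma der_factor : map_mx f P *m Q = - (P *m map_mx f Q).
Proof. by apply/eqP; rewrite -subr_eq0 opprK -map_derM // PQ1 map_der1. Qed.

Lemma factor_der : P *m map_mx f Q = - (map_mx f P *m Q).
Proof. by rewrite der_factor opprK. Qed.

Lemma factor_der_e : P *m map_mx f e = map_mx f P *m (1%:M - e).
Proof.
rewrite map_derM // mulmxDr !mulmxA factor_der PQ1 mul1mx.
by rewrite mulNmx -mulmxA mulmxBr mulmx1 addrC.
Qed.

Lemma der_e_factor : map_mx f e *m Q = (1%:M - e) *m map_mx f Q.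
Proof.
by rewrite map_derM // mulmxDl -!mulmxA der_factor PQ1 mulmx1 mulmxN mulmxBl mul1mx !mulmxA.
Qed.
End OneDerivation.

Lemma factor_der_prod f g : derivation f -> derivation g ->
  P *m (map_mx f e *m map_mx g e) *m Q = map_mx f P *m (1%:M - e) *m map_mx g Q.
Proof.
move=> df dg; rewrite mulmxA factor_der_e // -!mulmxA der_e_factor //.
by rewrite (mulmxA (1%:M - e)) (compl_idem factor_idem).
Qed.

Section TwoDerivations.
Variables fi fj : R -> R.
Hypotheses (dfi : derivation fi) (dfj : derivation fj).
Hypothesis fij : forall x, fi (fj x) = fj (fi x).

Lemma factor_curv :
  P *m curv fi fj e *m Q =
  map_mx fj P *m (1%:M - e) *m map_mx fi Q - map_mx fi P *m (1%:M - e) *m map_mx fj Q.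
Proof. by rewrite /curv mulmxN mulNmx mulmxBr mulmxBl !factor_der_prod // opprB. Qed.

Local Notation conn f := (map_mx f P *m Q).

Lemma curvature_connection :
  P *m curv fi fj e *m Q = - map_mx fj (conn fi) - conn fi *m conn fj
                           + map_mx fi (conn fj) + conn fj *m conn fi.
Proof.
have der_conn (f g : R -> R) : derivation g ->
    map_mx g (conn f) = map_mx g (map_mx f P) *m Q + map_mx f P *m map_mx g Q.
  by move=> dg; rewrite map_derM.
have conn_prod (f g : R -> R) : derivation g ->
    conn f *m conn g = - (map_mx f P *m e *m map_mx g Q).
  by move=> dg; rewrite -mulmxA der_factor // !mulmxN !mulmxA.
have conn_der_antisym :
    map_mx fi (conn fj) - map_mx fj (conn fi)
    = map_mx fj P *m map_mx fi Q - map_mx fi P *m map_mx fj Q.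
  by rewrite !der_conn // map_der_comm // opprD addrACA subrr add0r.
have conn_comm : conn fj *m conn fi - conn fi *m conn fj
    = map_mx fi P *m e *m map_mx fj Q - map_mx fj P *m e *m map_mx fi Q.
  by rewrite !conn_prod // opprK addrC.
rewrite [RHS](ACl ((3*1)*(4*2)))/= conn_der_antisym conn_comm.
rewrite factor_curv // !mulmxBr !mulmxBl !mulmx1 !mulmxA.
by rewrite opprB addrACA [RHS]addrACA [- _ + - _]addrC.
Qed.

Local Notation coconn f := (P *m map_mx f Q).

(* Dual structure equation: coconn f = - conn f turns the previous one into an
   equation for minus the curvature, with the products in the opposite order. *)
Lemma curvature_coconnection :
  - (P *m curv fi fj e *m Q) = - map_mx fj (coconn fi) - coconn fj *m coconn fi
                               + map_mx fi (coconn fj) + coconn fi *m coconn fj.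
Proof.
rewrite !factor_der // !map_derN // mulNmx mulmxN !opprK mulNmx mulmxN !opprK.
by rewrite curvature_connection !opprD !opprK [RHS](ACl (1*4*3*2)).
Qed.
End TwoDerivations.
End Factorization.

Section Entries.
Variable R : pzRingType.

Lemma row_col_entry p q r (M : 'M[R]_(p, q)) (N : 'M[R]_q) (K : 'M[R]_(q, r)) k l :
  (row k M *m N *m col l K) 0 0 = (M *m N *m K) k l.
Proof. by rewrite -row_mul !mxE; apply: eq_bigr => a _; rewrite !mxE. Qed.

Lemma double_sum_entry p q r s (G : 'M[R]_(p, q)) (M : 'M[R]_(q, r)) (H : 'M[R]_(r, s)) l k :
  \sum_a \sum_b G l a * M a b * H b k = (G *m M *m H) l k.
Proof.
rewrite mxE exchange_big /=; apply: eq_bigr => b _.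
by rewrite mxE mulr_suml.
Qed.

Lemma col_mul p q r (M : 'M[R]_(p, q)) (N : 'M[R]_(q, r)) k : col k (M *m N) = M *m col k N.
Proof. by apply/matrixP=> i b; rewrite !mxE; apply: eq_bigr => a _; rewrite !mxE. Qed.
End Entries.

Lemma lsc_sum_row (A : unitRingType) p q (M : 'M[A]_p) (N : 'M[A]_(p, q)) k :
  \sum_l lsc (M k l) (row l N) = row k (M *m N).
Proof. by apply/matrixP=> i b; rewrite summxE !mxE; apply: eq_bigr => l _; rewrite !mxE. Qed.

Lemma rsc_sum_col (A : unitRingType) p q (N : 'M[A]_(q, p)) (M : 'M[A]_p) k :
  \sum_l rsc (col l N) (M l k) = col k (N *m M).
Proof. by apply/matrixP=> i b; rewrite summxE !mxE; apply: eq_bigr => l _; rewrite !mxE. Qed.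

Section Frame.
Variables (A : unitRingType) (n m : nat) (d : 'I_n -> A -> A) (X : 'rV[A]_m) (ginv : 'M[A]_n).

Definition frame : 'M[A]_(n, m) := \matrix_(k, a) d k (X 0 a).
Definition coframe : 'M[A]_(m, n) := frame^T *m ginv.

Lemma Evec_frame k : Evec d X k = row k frame.
Proof. by apply/matrixP=> i a; rewrite !mxE (ord1 i). Qed.

Lemma gmet_frame : gmet d X = frame *m frame^T.
Proof. by apply/matrixP=> i j; rewrite !mxE; apply: eq_bigr => a _; rewrite !mxE. Qed.

Lemma Etil_coframe l : Etil d X ginv l = col l coframe.
Proof.
apply/matrixP=> a i; rewrite (ord1 i) summxE !mxE; apply: eq_bigr => j _.
by rewrite !mxE.
Qed.

Lemma eproj_frame : eproj d X ginv = coframe *m frame.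
Proof.
apply/matrixP=> a b; rewrite summxE !mxE; apply: eq_bigr => j _.
by rewrite !mxE big_ord1 Etil_coframe !mxE.
Qed.

Hypothesis h2 : (2%:R : A) \is a GRing.unit.
Hypothesis d_der : forall i, derivation (d i).
Hypothesis d_comm : forall i j x, d i (d j x) = d j (d i x).

Definition christ (i j l : 'I_n) : A := \sum_a d i (d j (X 0 a)) * d l (X 0 a).
Definition cochrist (i j l : 'I_n) : A := \sum_a d l (X 0 a) * d i (d j (X 0 a)).

Lemma christC i j l : christ i j l = christ j i l.
Proof. by apply: eq_bigr => a _; rewrite d_comm. Qed.

Lemma cochristC i j l : cochrist i j l = cochrist j i l.
Proof. by apply: eq_bigr => a _; rewrite d_comm. Qed.

Lemma der_gmet i j l : d i (gmet d X j l) = christ i j l + cochrist i l j.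
Proof.
rewrite gmet_frame mxE der_sum // -big_split; apply: eq_bigr => a _.
by rewrite !mxE derM.
Qed.

Lemma cGam_christ i j l : cGam d X i j l = Defs.half A * (christ i j l + cochrist i j l).
Proof.
rewrite /cGam !der_gmet (christC j l) (cochristC j i) (cochristC l i).
by rewrite [X in X - _](AC (2*2) ((1*4)*(3*2)))/= addrK.
Qed.

Lemma Ups_christ i j l : Ups d X i j l = Defs.half A * (christ i j l - cochrist i j l).
Proof.
by congr (_ * (_ - _)); rewrite !mxE; apply: eq_bigr => a _; rewrite !mxE.
Qed.

Lemma half_double (x : A) : Defs.half A * (x + x) = x.
Proof. by rewrite -mulr2n -mulr_natl mulrA mulVr // mul1r. Qed.

Lemma Gam3_christ i j l : Gam3 d X i j l = christ i j l.
Proof.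
by rewrite /Gam3 cGam_christ Ups_christ -mulrDr addrACA subrr addr0 half_double.
Qed.

Lemma Gamt3_cochrist i j l : Gamt3 d X i j l = cochrist i j l.
Proof.
rewrite /Gamt3 cGam_christ Ups_christ -mulrBr opprB (addrC (christ _ _ _)).
by rewrite addrACA subrr addr0 half_double.
Qed.

Lemma Gam_frame i : \matrix_(k, l) Gam d X ginv i k l = map_mx (d i) frame *m coframe.
Proof.
apply/matrixP=> k l; rewrite /coframe mulmxA !mxE; apply: eq_bigr => q _.
by rewrite Gam3_christ !mxE; congr (_ * _); apply: eq_bigr => a _; rewrite !mxE.
Qed.

Lemma Gamt_frame i :
  \matrix_(l, k) Gamt d X ginv i k l = ginv *m frame *m map_mx (d i) frame^T.
Proof.
apply/matrixP=> l k; rewrite -mulmxA !mxE; apply: eq_bigr => q _.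
by rewrite Gamt3_cochrist !mxE; congr (_ * _); apply: eq_bigr => a _; rewrite !mxE.
Qed.

Hypothesis hginvR : gmet d X *m ginv = 1%:M.
Hypothesis hginvL : ginv *m gmet d X = 1%:M.

Lemma frame_coframe : frame *m coframe = 1%:M.
Proof. by rewrite /coframe mulmxA -gmet_frame hginvR. Qed.

Lemma dual_frame_coframe : (ginv *m frame) *m frame^T = 1%:M.
Proof. by rewrite -mulmxA -gmet_frame hginvL. Qed.

Lemma eproj_idem : eproj d X ginv *m eproj d X ginv = eproj d X ginv.
Proof. by rewrite eproj_frame (factor_idem frame_coframe). Qed.

Lemma frame_eproj : frame *m eproj d X ginv = frame.
Proof. by rewrite eproj_frame (factor_Pe frame_coframe). Qed.

Lemma dual_eproj : frame^T *m (ginv *m frame) = eproj d X ginv.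
Proof. by rewrite mulmxA eproj_frame. Qed.

Lemma eproj_trframe : eproj d X ginv *m frame^T = frame^T.
Proof. by rewrite -dual_eproj (factor_eQ dual_frame_coframe). Qed.

Lemma Rcurv_eproj i j : Rcurv d X ginv i j = curv (d i) (d j) (eproj d X ginv).
Proof. by []. Qed.

Lemma Rcomp_frame l k i j :
  Rcomp d X ginv l k i j = (frame *m Rcurv d X ginv i j *m coframe) k l.
Proof. by rewrite /Rcomp Evec_frame Etil_coframe row_col_entry. Qed.

Lemma Rtcomp_frame l k i j :
  Rtcomp d X ginv l k i j = (- (ginv *m frame *m Rcurv d X ginv i j *m frame^T)) l k.
Proof.
rewrite /Rtcomp mxE; congr (- _).
under eq_bigr => q _ do under eq_bigr => p _ do
  rewrite Evec_frame Etil_coframe row_col_entry.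
by rewrite double_sum_entry /coframe -!mulmxA hginvL mulmx1.
Qed.

Lemma Rcomp_christoffel l k i j :
  Rcomp d X ginv l k i j =
    - d j (Gam d X ginv i k l) - (\sum_p Gam d X ginv i k p * Gam d X ginv j p l)
    + d i (Gam d X ginv j k l) + (\sum_p Gam d X ginv j k p * Gam d X ginv i p l).
Proof.
pose G i := \matrix_(k, l) Gam d X ginv i k l.
transitivity ((- map_mx (d j) (G i) - G i *m G j + map_mx (d i) (G j) + G j *m G i) k l);
  last by rewrite !mxE; congr (_ - _ + _ + _); apply: eq_bigr => p _; rewrite !mxE.
rewrite Rcomp_frame /G !Gam_frame Rcurv_eproj eproj_frame.
by rewrite (curvature_connection frame_coframe (d_der i) (d_der j) (d_comm i j)).
Qed.

Lemma Rtcomp_christoffel l k i j :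
  Rtcomp d X ginv l k i j =
    - d j (Gamt d X ginv i k l) - (\sum_p Gamt d X ginv j p l * Gamt d X ginv i k p)
    + d i (Gamt d X ginv j k l) + (\sum_p Gamt d X ginv i p l * Gamt d X ginv j k p).
Proof.
pose G i := \matrix_(l, k) Gamt d X ginv i k l.
transitivity ((- map_mx (d j) (G i) - G j *m G i + map_mx (d i) (G j) + G i *m G j) l k);
  last by rewrite !mxE; congr (_ - _ + _ + _); apply: eq_bigr => p _; rewrite !mxE.
rewrite Rtcomp_frame /G !Gamt_frame Rcurv_eproj -dual_eproj.
by rewrite (curvature_coconnection dual_frame_coframe (d_der i) (d_der j) (d_comm i j)).
Qed.

(* Third claim: E_k R_{ij} = E_k R_{ij} e expands along the frame. *)
Lemma nabla_commutator k i j :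
  nabla d X ginv i (nabla d X ginv j (Evec d X k))
    - nabla d X ginv j (nabla d X ginv i (Evec d X k))
  = \sum_l lsc (Rcomp d X ginv l k i j) (Evec d X l).
Proof.
rewrite (conn_right_commutator _ (d_der i) (d_der j) (d_comm i j)).
under eq_bigr => l _ do rewrite Rcomp_frame Evec_frame.
rewrite lsc_sum_row -mulmxA -eproj_frame Rcurv_eproj -mulmxA.
by rewrite -(curv_idem_comm eproj_idem (d_der i) (d_der j)) mulmxA frame_eproj row_mul Evec_frame.
Qed.

(* Fourth claim: -R_{ij} E_k^t = -e R_{ij} E_k^t expands along the E_l^t. *)
Lemma nablat_commutator k i j :
  nablat d X ginv i (nablat d X ginv j (Evec d X k)^T)
    - nablat d X ginv j (nablat d X ginv i (Evec d X k)^T)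
  = \sum_l rsc (Evec d X l)^T (Rtcomp d X ginv l k i j).
Proof.
rewrite (conn_left_commutator _ (d_der i) (d_der j) (d_comm i j)).
under eq_bigr => l _ do rewrite Rtcomp_frame Evec_frame tr_row.
rewrite rsc_sum_col mulmxN linearN !mulmxA -(mulmxA frame^T) dual_eproj Rcurv_eproj.
rewrite (curv_idem_comm eproj_idem (d_der i) (d_der j)) -mulmxA eproj_trframe.
by rewrite /= col_mul Evec_frame tr_row.
Qed.

End Frame.

Unset Implicit Arguments.
Theorem mainTheorem13 (A : unitRingType) (n m : nat)
  (d : 'I_n -> A -> A) (X : 'rV[A]_m) (ginv : 'M[A]_n)
  (* 1/2 exists in A (A is an algebra over the reals) *)
  (h2 : (2%:R : A) \is a GRing.unit)
  (* the d i are commuting derivations *)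
  (d_add : forall i x y, d i (x + y) = d i x + d i y)
  (d_mul : forall i x y, d i (x * y) = d i x * y + x * d i y)
  (d_comm : forall i j x, d i (d j x) = d j (d i x))
  (* X is a noncommutative space embedded in A^m: g is invertible *)
  (hginvR : gmet d X *m ginv = 1%:M)
  (hginvL : ginv *m gmet d X = 1%:M) :
  (forall l k i j,
     Rcomp d X ginv l k i j =
       - d j (Gam d X ginv i k l) - (\sum_p Gam d X ginv i k p * Gam d X ginv j p l)
       + d i (Gam d X ginv j k l) + (\sum_p Gam d X ginv j k p * Gam d X ginv i p l)) /\
  (forall l k i j,
     Rtcomp d X ginv l k i j =
       - d j (Gamt d X ginv i k l) - (\sum_p Gamt d X ginv j p l * Gamt d X ginv i k p)
       + d i (Gamt d X ginv j k l) + (\sum_p Gamt d X ginv i p l * Gamt d X ginv j k p)) /\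
  (forall k i j,
     nabla d X ginv i (nabla d X ginv j (Evec d X k))
       - nabla d X ginv j (nabla d X ginv i (Evec d X k))
     = \sum_l lsc (Rcomp d X ginv l k i j) (Evec d X l)) /\
  (forall k i j,
     nablat d X ginv i (nablat d X ginv j (Evec d X k)^T)
       - nablat d X ginv j (nablat d X ginv i (Evec d X k)^T)
     = \sum_l rsc (Evec d X l)^T (Rtcomp d X ginv l k i j)).
Proof.
have d_der i : derivation (d i) by split; [exact: d_add | exact: d_mul].
split; [|split; [|split]].
- exact: (Rcomp_christoffel h2 d_der d_comm hginvR).
- exact: (Rtcomp_christoffel h2 d_der d_comm hginvL).
- exact: (nabla_commutator d_der d_comm hginvR).
- exact: (nablat_commutator d_der d_comm hginvR hginvL).
Qed.
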